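(* For every $c_*\in(0,1/8]$ there exist constants $C,C'>0$ (depending only on $c_*$, $s$ and the $\lambda_i$) such that the following holds. Let $\varepsilon,\delta\in(0,1]$, $R\geq1$, frequencies $\mathbf{z}_1,\dots,\mathbf{z}_R$ with phases $\phi_1,\dots,\phi_R$, assume $N\geq(2/(\varepsilon\delta))^{CR^3}$, and let $(q,U,V,(r_n)_{n\in\mathbb{Z}},P,(Q_n)_{n\in\mathbb{Z}})$ be a linearization system with parameter $c_*$ for $(\varepsilon,\delta,\phi_1,\dots,\phi_R)$. For $h:\mathbb{Z}\to\mathbb{C}$ supported in $[N]$ define $\widetilde h:[N]\to\mathbb{C}$ by $$\widetilde h(n)=\frac{1}{|P|}\sum_{m\in P}\frac{1}{|Q_{n-m}|}\sum_{k\in Q_{n-m}}h(n+k).$$ If $\|h\|_\infty\leq\delta^{-1}$, then for all $i\in[R]$ $$\Big|\frac1N\sum_{n\in[N]}h(n)e(\phi_i(n))-\frac1N\sum_{n\in[N]}\widetilde h(n)e(\phi_i(n))\Big|\leq C'\varepsilon,$$ and $$\Big|\frac1N\sum_{n\in[N]}h(n)-\frac1N\sum_{n\in[N]}\widetilde h(n)\Big|\leq C'\varepsilon.$$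
   Context: $[N]=\{1,\dots,N\}$, $e(x)=e^{2\pi i x}$, $\|x\|$ is the distance from $x$ to the nearest integer. $M$ is a prime with $Y\leq M\leq 2Y$, $Y=2(|\lambda_1|+\dots+|\lambda_s|)N$, for fixed nonzero integers $\lambda_1,\dots,\lambda_s$. For $\mathbf{z}_i=(x_i,y_i)\in\mathbb{Z}_M\times\mathbb{Z}_{M^2}$, $\phi_i(n)=\frac{x_i}{M}n+\frac{y_i}{M^2}n^2$. A linearization system with parameter $c_*$ for $(\varepsilon,\delta,\phi_1,\dots,\phi_R)$ consists of integers $q\geq1$, $U,V\geq1$, $r_n\geq1$ ($n\in\mathbb{Z}$) with $N^{c_*/R^2}\leq U\leq 2N^{c_*/R^2}$, $U^{c_*/R}\leq V\leq 2U^{c_*/R}$, $q\leq N^{1/4}$, $r_n\leq U^{1/4}$, together with $P=\{q,2q,\dots,Uq\}$ and $Q_n=\{qr_n,2qr_n,\dots,Vqr_n\}$, such that $\|\phi_i(n+m+k)-\phi_i(n+m)\|\leq\varepsilon\delta$ for all $n\in[N]$, $m\in P$, $k\in Q_n$, $i\in[R]$. *)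

From Stdlib Require Import Reals ZArith Znumtheory List Lia Lra.
Open Scope R_scope.

Definition Cx : Type := (R * R)%type.
Definition Cx0 : Cx := (0, 0).
Definition Cxadd (z w : Cx) : Cx := (fst z + fst w, snd z + snd w).
Definition Cxsub (z w : Cx) : Cx := (fst z - fst w, snd z - snd w).
Definition Cxmul (z w : Cx) : Cx :=
  (fst z * fst w - snd z * snd w, fst z * snd w + snd z * fst w).
Definition Cxscale (a : R) (z : Cx) : Cx := (a * fst z, a * snd z).
Definition Cxmod (z : Cx) : R := sqrt (fst z ^ 2 + snd z ^ 2).

Definition ee (x : R) : Cx := (cos (2 * PI * x), sin (2 * PI * x)).

Definition dist_int (x : R) : R := Rmin (frac_part x) (1 - frac_part x).

Definition Cxsum (a len : nat) (f : nat -> Cx) : Cx :=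
  fold_right (fun j acc => Cxadd (f j) acc) Cx0 (seq a len).

(* phi_i(n) = x_i n / M + y_i n^2 / M^2, with x_i in Z_M, y_i in Z_{M^2}
   represented by integer representatives. *)
Definition phase (M xi yi : Z) (n : Z) : R :=
  IZR xi * IZR n / IZR M + IZR yi * IZR n ^ 2 / IZR M ^ 2.

(* Linearization system with parameter cstar for (eps, delta, phi_1..phi_R).
   P = {q, 2q, ..., Uq},  Q_n = {q r_n, 2 q r_n, ..., V q r_n}. *)
Definition linearization_system (cstar eps delta : R) (R_ N : nat)
  (phi : nat -> Z -> R) (q U V : nat) (r : Z -> nat) : Prop :=
  (1 <= q)%nat /\ (1 <= U)%nat /\ (1 <= V)%nat /\
  (forall n : Z, (1 <= r n)%nat) /\
  Rpower (INR N) (cstar / INR R_ ^ 2) <= INR U <=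
    2 * Rpower (INR N) (cstar / INR R_ ^ 2) /\
  Rpower (INR U) (cstar / INR R_) <= INR V <= 2 * Rpower (INR U) (cstar / INR R_) /\
  INR q <= Rpower (INR N) (1/4) /\
  (forall n : Z, INR (r n) <= Rpower (INR U) (1/4)) /\
  (forall (n : nat) (j l i : nat),
      (1 <= n <= N)%nat -> (1 <= j <= U)%nat -> (1 <= l <= V)%nat ->
      (1 <= i <= R_)%nat ->
      let m := (Z.of_nat j * Z.of_nat q)%Z in
      let k := (Z.of_nat l * Z.of_nat q * Z.of_nat (r (Z.of_nat n)))%Z in
      dist_int (phi i (Z.of_nat n + m + k)%Z - phi i (Z.of_nat n + m)%Z)
        <= eps * delta).

(* htilde(n) = 1/|P| sum_{m in P} 1/|Q_{n-m}| sum_{k in Q_{n-m}} h(n+k),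
   with |P| = U, |Q_n| = V (q, r_n >= 1). *)
Definition htilde (q U V : nat) (r : Z -> nat) (h : Z -> Cx) (n : Z) : Cx :=
  Cxscale (/ INR U) (Cxsum 1 U (fun j =>
    let m := (Z.of_nat j * Z.of_nat q)%Z in
    Cxscale (/ INR V) (Cxsum 1 V (fun l =>
      h (n + Z.of_nat l * Z.of_nat q * Z.of_nat (r (n - m)%Z))%Z)))).

Definition avgN (N : nat) (f : Z -> Cx) : Cx :=
  Cxscale (/ INR N) (Cxsum 1 N (fun n => f (Z.of_nat n))).

(* Shifting a bounded function by s inside a sum over an interval changes the
   sum by at most 2 s sup|f|.  After substituting n -> n + m, the average that
   defines h~, tested against a phase e(phi), differs from the sum for h by three
   errors: a shift of n by m = j q <= U q <= 2 N^(3/8); for fixed n, a shift of j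
   along P by l r_n <= V U^(1/4) <= 2 U^(3/8); and the replacement of
   e(phi(n + m + k)) by e(phi(n + m)), which costs 4 pi eps delta by the
   linearization property since |e(a) - e(b)| <= 4 pi ||a - b||.  Taking
   C = 2 / c_* makes N and U at least (2 / (eps delta))^2, so after multiplying
   by sup|h| <= 1/delta both shift errors are O(eps). *)

From Stdlib Require Import Reals ZArith Znumtheory List Lia Lra.
From Coquelicot Require Import Complex.
Open Scope R_scope.

Lemma cx_eq (z w : Cx) : fst z = fst w -> snd z = snd w -> z = w.
Proof. destruct z, w; simpl; intros; subst; reflexivity. Qed.

Ltac cxring := apply cx_eq; simpl; ring.

Lemma Cxmod_ge0 z : 0 <= Cxmod z.
Proof. exact (Cmod_ge_0 z). Qed.

Lemma Cxmod_add_le z w : Cxmod (Cxadd z w) <= Cxmod z + Cxmod w.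
Proof. exact (Cmod_triangle z w). Qed.

Lemma Cxmod_mul z w : Cxmod (Cxmul z w) = Cxmod z * Cxmod w.
Proof. exact (Cmod_mult z w). Qed.

Lemma Cxmod_sub_le z w : Cxmod (Cxsub z w) <= Cxmod z + Cxmod w.
Proof.
  replace (Cxsub z w) with (Cxadd z (Copp w)) by cxring.
  eapply Rle_trans; [apply Cxmod_add_le|].
  change (Cxmod (Copp w)) with (Cmod (Copp w)). rewrite Cmod_opp. apply Rle_refl.
Qed.

Lemma Cxmod_subC z w : Cxmod (Cxsub z w) = Cxmod (Cxsub w z).
Proof.
  replace (Cxsub w z) with (Copp (Cxsub z w)) by cxring.
  symmetry; exact (Cmod_opp _).
Qed.

Lemma Cxmod_sub_trans a b c :
  Cxmod (Cxsub a c) <= Cxmod (Cxsub a b) + Cxmod (Cxsub b c).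
Proof.
  replace (Cxsub a c) with (Cxadd (Cxsub a b) (Cxsub b c)) by cxring.
  apply Cxmod_add_le.
Qed.

Lemma Cxmod_sub_chain a b c d e :
  Cxmod (Cxsub a e) <=
  Cxmod (Cxsub a b) + Cxmod (Cxsub b c) + Cxmod (Cxsub c d) + Cxmod (Cxsub d e).
Proof.
  assert (H1 := Cxmod_sub_trans a b e). assert (H2 := Cxmod_sub_trans b c e).
  assert (H3 := Cxmod_sub_trans c d e). lra.
Qed.

Lemma Cxmod_scale a z : Cxmod (Cxscale a z) = Rabs a * Cxmod z.
Proof.
  replace (Cxscale a z) with (Cxmul (RtoC a) z) by cxring.
  rewrite Cxmod_mul. unfold Cxmod. rewrite <- (Cmod_R a). reflexivity.
Qed.

Lemma Cxmod_mul_le z w B : Cxmod z <= B -> Cxmod w <= 1 -> Cxmod (Cxmul z w) <= B.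
Proof.
  intros Hz Hw. rewrite Cxmod_mul.
  assert (0 <= Cxmod z) by apply Cxmod_ge0. assert (0 <= Cxmod w) by apply Cxmod_ge0.
  nra.
Qed.

Lemma Cxmul_scale a z w : Cxmul (Cxscale a z) w = Cxscale a (Cxmul z w).
Proof. cxring. Qed.

Lemma Cxsub_scale a z w : Cxsub (Cxscale a z) (Cxscale a w) = Cxscale a (Cxsub z w).
Proof. cxring. Qed.

Lemma Cxsum_cons a n f : Cxsum a (S n) f = Cxadd (f a) (Cxsum (S a) n f).
Proof. reflexivity. Qed.

Lemma Cxsum_ext a n f g : (forall j, (a <= j < a + n)%nat -> f j = g j) ->
  Cxsum a n f = Cxsum a n g.
Proof.
  revert a; induction n as [|n IH]; intros a H; [reflexivity|].
  rewrite !Cxsum_cons, H, (IH (S a)) by (intros; try apply H; lia). reflexivity.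
Qed.

Lemma Cxsum_add a n f g :
  Cxsum a n (fun j => Cxadd (f j) (g j)) = Cxadd (Cxsum a n f) (Cxsum a n g).
Proof. revert a; induction n as [|n IH]; intros a; [cxring|]. rewrite !Cxsum_cons, IH. cxring. Qed.

Lemma Cxsum_sub a n f g :
  Cxsum a n (fun j => Cxsub (f j) (g j)) = Cxsub (Cxsum a n f) (Cxsum a n g).
Proof. revert a; induction n as [|n IH]; intros a; [cxring|]. rewrite !Cxsum_cons, IH. cxring. Qed.

Lemma Cxsum_scale a n c f :
  Cxsum a n (fun j => Cxscale c (f j)) = Cxscale c (Cxsum a n f).
Proof. revert a; induction n as [|n IH]; intros a; [cxring|]. rewrite !Cxsum_cons, IH. cxring. Qed.

Lemma Cxsum_mulr a n f w :
  Cxsum a n (fun j => Cxmul (f j) w) = Cxmul (Cxsum a n f) w.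
Proof. revert a; induction n as [|n IH]; intros a; [cxring|]. rewrite !Cxsum_cons, IH. cxring. Qed.

Lemma Cxsum_const a n z : Cxsum a n (fun _ => z) = Cxscale (INR n) z.
Proof.
  revert a; induction n as [|n IH]; intros a; [cxring|].
  rewrite Cxsum_cons, IH, S_INR. cxring.
Qed.

Lemma Cxsum_norm_le a n f B :
  (forall j, (a <= j < a + n)%nat -> Cxmod (f j) <= B) ->
  Cxmod (Cxsum a n f) <= INR n * B.
Proof.
  revert a; induction n as [|n IH]; intros a H.
  - simpl. change (Cmod 0 <= 0 * B). rewrite Cmod_0. lra.
  - rewrite Cxsum_cons, S_INR. eapply Rle_trans; [apply Cxmod_add_le|].
    assert (H1 := H a ltac:(lia)).
    assert (H2 := IH (S a) ltac:(intros; apply H; lia)). lra.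
Qed.

Lemma Cxsum_exchange a n b m (f : nat -> nat -> Cx) :
  Cxsum a n (fun j => Cxsum b m (fun k => f j k)) =
  Cxsum b m (fun k => Cxsum a n (fun j => f j k)).
Proof.
  revert a; induction n as [|n IH]; intros a.
  - simpl. rewrite (Cxsum_ext b m _ (fun _ => Cx0)), Cxsum_const by reflexivity. cxring.
  - rewrite Cxsum_cons, IH, <- Cxsum_add. reflexivity.
Qed.

Lemma Cxsum_shift1 (G : Z -> Cx) a n :
  Cxadd (Cxsum a n (fun j => G (Z.of_nat j + 1)%Z)) (G (Z.of_nat a)) =
  Cxadd (Cxsum a n (fun j => G (Z.of_nat j))) (G (Z.of_nat (a + n))).
Proof.
  revert a; induction n as [|n IH]; intros a.
  - rewrite Nat.add_0_r. reflexivity.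
  - rewrite !Cxsum_cons. specialize (IH (S a)).
    replace (Z.of_nat a + 1)%Z with (Z.of_nat (S a)) by lia.
    replace (a + S n)%nat with (S a + n)%nat by lia.
    apply (f_equal fst) in IH as I1. apply (f_equal snd) in IH as I2.
    simpl in I1, I2. apply cx_eq; simpl; lra.
Qed.

Lemma Cxsum_shift1_le (G : Z -> Cx) B a n :
  (forall z, Cxmod (G z) <= B) ->
  Cxmod (Cxsub (Cxsum a n (fun j => G (Z.of_nat j)))
               (Cxsum a n (fun j => G (Z.of_nat j + 1)%Z))) <= 2 * B.
Proof.
  intros HB. assert (E := Cxsum_shift1 G a n).
  replace (Cxsub _ _) with (Cxsub (G (Z.of_nat a)) (G (Z.of_nat (a + n)))).
  - eapply Rle_trans; [apply Cxmod_sub_le|].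
    assert (H1 := HB (Z.of_nat a)). assert (H2 := HB (Z.of_nat (a + n))). lra.
  - apply (f_equal fst) in E as I1. apply (f_equal snd) in E as I2.
    simpl in I1, I2. apply cx_eq; simpl; lra.
Qed.

Lemma Cxsum_shift_le (G : Z -> Cx) B a n s :
  (forall z, Cxmod (G z) <= B) ->
  Cxmod (Cxsub (Cxsum a n (fun j => G (Z.of_nat j)))
               (Cxsum a n (fun j => G (Z.of_nat j + Z.of_nat s)%Z))) <= 2 * INR s * B.
Proof.
  intros HB. induction s as [|s IH].
  - simpl. rewrite (Cxsum_ext a n (fun j => G (Z.of_nat j + 0)%Z) (fun j => G (Z.of_nat j)))
      by (intros; f_equal; lia).
    replace (Cxsub _ _) with Cx0 by cxring. change (Cmod 0 <= 2 * 0 * B).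
    rewrite Cmod_0. lra.
  - eapply Rle_trans; [apply Cxmod_sub_trans with
      (b := Cxsum a n (fun j => G (Z.of_nat j + Z.of_nat s)%Z))|].
    rewrite (Cxsum_ext a n (fun j => G (Z.of_nat j + Z.of_nat (S s))%Z)
               (fun j => G (Z.of_nat j + 1 + Z.of_nat s)%Z)) by (intros; f_equal; lia).
    assert (H := Cxsum_shift1_le (fun z => G (z + Z.of_nat s)%Z) B a n
                   ltac:(intros; apply HB)).
    rewrite S_INR. simpl in H. lra.
Qed.

Lemma Cxsum_double_shift_le (G : nat -> Z -> Cx) U N q B :
  (forall j z, Cxmod (G j z) <= B) ->
  Cxmod (Cxsub (Cxsum 1 U (fun j => Cxsum 1 N (fun n => G j (Z.of_nat n))))
     (Cxsum 1 U (fun j => Cxsum 1 N (fun n => G j (Z.of_nat n + Z.of_nat j * Z.of_nat q)%Z))))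
  <= INR U * (2 * (INR U * INR q) * B).
Proof.
  intros HB. rewrite <- Cxsum_sub. apply Cxsum_norm_le. intros j Hj.
  rewrite (Cxsum_ext 1 N (fun n => G j (Z.of_nat n + Z.of_nat j * Z.of_nat q)%Z)
             (fun n => G j (Z.of_nat n + Z.of_nat (j * q))%Z))
    by (intros; rewrite Nat2Z.inj_mul; reflexivity).
  eapply Rle_trans; [apply Cxsum_shift_le, HB|].
  assert (0 <= B) by (eapply Rle_trans; [apply Cxmod_ge0|apply (HB j 0%Z)]).
  assert (INR j <= INR U) by (apply le_INR; lia).
  assert (0 <= INR q) by apply pos_INR.
  rewrite mult_INR. apply Rmult_le_compat_r; [lra|]. nra.
Qed.

Section AverageComparison.
Variables (N U V q : nat) (r : Z -> nat) (h g : Z -> Cx) (B eta rho : R).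
Hypotheses (HN : (1 <= N)%nat) (HU : (1 <= U)%nat) (HV : (1 <= V)%nat)
  (Hh : forall n, Cxmod (h n) <= B) (Hg : forall n, Cxmod (g n) <= 1)
  (Hr : forall n, INR (r n) <= rho)
  (Hlin : forall n j l, (1 <= n <= N)%nat -> (1 <= j <= U)%nat -> (1 <= l <= V)%nat ->
     Cxmod (Cxsub (g (Z.of_nat n + Z.of_nat j * Z.of_nat q)%Z)
        (g (Z.of_nat n + Z.of_nat j * Z.of_nat q
            + Z.of_nat l * Z.of_nat q * Z.of_nat (r (Z.of_nat n)))%Z)) <= eta).

Let Zq := Z.of_nat q.
Let F z := Cxmul (h z) (g z).
Let T j l z := Cxmul (h (z + Z.of_nat l * Zq * Z.of_nat (r (z - Z.of_nat j * Zq)))%Z) (g z).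

Lemma htilde_mul_expand n :
  Cxmul (htilde q U V r h n) (g n) =
  Cxscale (/ INR U) (Cxscale (/ INR V) (Cxsum 1 U (fun j => Cxsum 1 V (fun l => T j l n)))).
Proof.
  unfold htilde. rewrite Cxmul_scale, <- Cxsum_mulr. f_equal.
  rewrite <- Cxsum_scale. apply Cxsum_ext; intros j _.
  rewrite Cxmul_scale, <- Cxsum_mulr. reflexivity.
Qed.

Lemma shift_along_progression_le l : (1 <= l <= V)%nat ->
  Cxmod (Cxsub
    (Cxsum 1 U (fun j => Cxsum 1 N (fun n => F (Z.of_nat n + Z.of_nat j * Zq)%Z)))
    (Cxsum 1 U (fun j => Cxsum 1 N (fun n =>
       F (Z.of_nat n + Z.of_nat j * Zq + Z.of_nat l * Zq * Z.of_nat (r (Z.of_nat n)))%Z))))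
  <= INR N * (2 * (INR V * rho) * B).
Proof.
  intros Hl. rewrite !(Cxsum_exchange 1 U 1 N), <- Cxsum_sub.
  apply Cxsum_norm_le. intros n Hn.
  set (G := fun z => F (Z.of_nat n + z * Zq)%Z).
  rewrite (Cxsum_ext 1 U (fun j => F (Z.of_nat n + Z.of_nat j * Zq)%Z)
             (fun j => G (Z.of_nat j))) by reflexivity.
  rewrite (Cxsum_ext 1 U (fun j => F (Z.of_nat n + Z.of_nat j * Zq
             + Z.of_nat l * Zq * Z.of_nat (r (Z.of_nat n)))%Z)
             (fun j => G (Z.of_nat j + Z.of_nat (l * r (Z.of_nat n)))%Z))
    by (intros; unfold G; f_equal; rewrite Nat2Z.inj_mul; ring).
  eapply Rle_trans; [apply Cxsum_shift_le; intros; apply Cxmod_mul_le; auto|].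
  assert (0 <= B) by (eapply Rle_trans; [apply Cxmod_ge0|apply (Hh 0%Z)]).
  assert (INR l <= INR V) by (apply le_INR; lia).
  assert (0 <= INR (r (Z.of_nat n))) by apply pos_INR.
  assert (0 <= INR l) by apply pos_INR.
  specialize (Hr (Z.of_nat n)).
  rewrite mult_INR. apply Rmult_le_compat_r; [lra|]. nra.
Qed.

Lemma linearization_step_le l : (1 <= l <= V)%nat ->
  Cxmod (Cxsub
    (Cxsum 1 U (fun j => Cxsum 1 N (fun n =>
       F (Z.of_nat n + Z.of_nat j * Zq + Z.of_nat l * Zq * Z.of_nat (r (Z.of_nat n)))%Z)))
    (Cxsum 1 U (fun j => Cxsum 1 N (fun n => T j l (Z.of_nat n + Z.of_nat j * Zq)%Z))))
  <= INR U * (INR N * (B * eta)).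
Proof.
  intros Hl. rewrite <- Cxsum_sub. apply Cxsum_norm_le. intros j Hj.
  rewrite <- Cxsum_sub. apply Cxsum_norm_le. intros n Hn.
  unfold F, T.
  replace (Z.of_nat n + Z.of_nat j * Zq - Z.of_nat j * Zq)%Z with (Z.of_nat n) by ring.
  match goal with |- Cxmod (Cxsub (Cxmul ?a ?b) (Cxmul ?a' ?c)) <= _ =>
    replace (Cxsub (Cxmul a b) (Cxmul a' c)) with (Cxmul a (Cxsub b c))
      by (replace a' with a by (f_equal; ring); cxring) end.
  rewrite Cxmod_mul, Cxmod_subC.
  apply Rmult_le_compat; try apply Cxmod_ge0; [apply Hh|]. apply Hlin; lia.
Qed.

Lemma inner_sum_error_le l : (1 <= l <= V)%nat ->
  Cxmod (Cxsub (Cxsum 1 U (fun j => Cxsum 1 N (fun n => F (Z.of_nat n))))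
               (Cxsum 1 U (fun j => Cxsum 1 N (fun n => T j l (Z.of_nat n)))))
  <= 4 * INR U * (INR U * INR q) * B + 2 * INR N * (INR V * rho) * B
     + INR U * INR N * B * eta.
Proof.
  intros Hl.
  assert (E1 := Cxsum_double_shift_le (fun _ => F) U N q B
                  ltac:(intros; apply Cxmod_mul_le; auto)).
  assert (E2 := shift_along_progression_le l Hl).
  assert (E3 := linearization_step_le l Hl).
  assert (E4 := Cxsum_double_shift_le (fun j => T j l) U N q B
                  ltac:(intros; apply Cxmod_mul_le; auto)).
  rewrite Cxmod_subC in E4. cbv beta in E1, E4. fold Zq in E1, E4.
  lazymatch type of E2 with Cxmod (Cxsub ?S1 ?S2) <= _ =>
  lazymatch type of E3 with Cxmod (Cxsub _ ?S3) <= _ =>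
    eapply Rle_trans; [apply (Cxmod_sub_chain _ S1 S2 S3)|] end end.
  lra.
Qed.

Lemma avg_htilde_mul_error_le :
  Cxmod (Cxsub (avgN N (fun n => Cxmul (h n) (g n)))
               (avgN N (fun n => Cxmul (htilde q U V r h n) (g n))))
  <= B * (4 * (INR U * INR q) / INR N + 2 * (INR V * rho) / INR U + eta).
Proof.
  assert (UP : 0 < INR U) by (apply lt_0_INR; lia).
  assert (VP : 0 < INR V) by (apply lt_0_INR; lia).
  assert (NP : 0 < INR N) by (apply lt_0_INR; lia).
  unfold avgN. rewrite Cxsub_scale, Cxmod_scale.
  rewrite (Cxsum_ext 1 N _ _ (fun n _ => htilde_mul_expand (Z.of_nat n))).
  rewrite !Cxsum_scale, (Cxsum_exchange 1 N 1 U).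
  rewrite (Cxsum_ext 1 U _ (fun j => Cxsum 1 V (fun l => Cxsum 1 N (fun n => T j l (Z.of_nat n)))))
    by (intros; apply Cxsum_exchange).
  rewrite (Cxsum_exchange 1 U 1 V).
  replace (Cxsum 1 N (fun n => Cxmul (h (Z.of_nat n)) (g (Z.of_nat n)))) with
    (Cxscale (/ INR U) (Cxscale (/ INR V)
       (Cxsum 1 V (fun l => Cxsum 1 U (fun j => Cxsum 1 N (fun n => F (Z.of_nat n)))))))
    by (rewrite !Cxsum_const; apply cx_eq; unfold F; simpl; field; lra).
  rewrite !Cxsub_scale, <- Cxsum_sub, !Cxmod_scale.
  rewrite !Rabs_right by (apply Rle_ge, Rlt_le, Rinv_0_lt_compat; lra).
  eapply Rle_trans.
  { do 3 (apply Rmult_le_compat_l; [apply Rlt_le, Rinv_0_lt_compat; lra|]).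
    apply Cxsum_norm_le. intros l Hl. apply inner_sum_error_le. lia. }
  right. field. lra.
Qed.

End AverageComparison.

Lemma avg_htilde_mul_le (N U V q : nat) (r : Z -> nat) (h g : Z -> Cx) (eps delta eta : R) :
  0 < delta -> (1 <= N)%nat -> (1 <= U)%nat -> (1 <= V)%nat ->
  INR U * INR q / (delta * INR N) <= eps ->
  INR V * Rpower (INR U) (1/4) / (delta * INR U) <= eps ->
  (forall n, INR (r n) <= Rpower (INR U) (1/4)) ->
  (forall n, Cxmod (h n) <= / delta) -> (forall n, Cxmod (g n) <= 1) ->
  (forall n j l, (1 <= n <= N)%nat -> (1 <= j <= U)%nat -> (1 <= l <= V)%nat ->
     Cxmod (Cxsub (g (Z.of_nat n + Z.of_nat j * Z.of_nat q)%Z)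
        (g (Z.of_nat n + Z.of_nat j * Z.of_nat q
            + Z.of_nat l * Z.of_nat q * Z.of_nat (r (Z.of_nat n)))%Z)) <= eta) ->
  Cxmod (Cxsub (avgN N (fun n => Cxmul (h n) (g n)))
               (avgN N (fun n => Cxmul (htilde q U V r h n) (g n))))
  <= 6 * eps + eta / delta.
Proof.
  intros Hd HN HU HV HUq HVU Hr Hh Hg Hlin.
  eapply Rle_trans; [apply (avg_htilde_mul_error_le N U V q r h g (/ delta) eta); auto|].
  assert (0 < INR U) by (apply lt_0_INR; lia).
  assert (0 < INR N) by (apply lt_0_INR; lia).
  replace (/ delta * _) with
    (4 * (INR U * INR q / (delta * INR N))
     + 2 * (INR V * Rpower (INR U) (1/4) / (delta * INR U)) + eta / delta)
    by (field; lra).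
  lra.
Qed.

Lemma avgN_mul_1 N f : avgN N (fun n => Cxmul (f n) (1, 0)) = avgN N f.
Proof. unfold avgN. f_equal. apply Cxsum_ext; intros. cxring. Qed.

Lemma ee_mod_le x : Cxmod (ee x) <= 1.
Proof.
  unfold Cxmod, ee; simpl. rewrite !Rmult_1_r, <- sqrt_1. apply sqrt_le_1_alt.
  assert (H := sin2_cos2 (2 * PI * x)). unfold Rsqr in H. lra.
Qed.

Lemma Rabs_cos_sub_le x y : Rabs (cos x - cos y) <= Rabs (x - y).
Proof.
  destruct (MVT_abs cos (fun t => - sin t) y x) as [c [Hc _]].
  { intros; apply derivable_pt_lim_cos. }
  rewrite Hc, Rabs_Ropp. assert (Rabs (sin c) <= 1) by (apply Rabs_le, SIN_bound).
  assert (0 <= Rabs (x - y)) by apply Rabs_pos. nra.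
Qed.

Lemma Rabs_sin_sub_le x y : Rabs (sin x - sin y) <= Rabs (x - y).
Proof.
  destruct (MVT_abs sin cos y x) as [c [Hc _]].
  { intros; apply derivable_pt_lim_sin. }
  rewrite Hc. assert (Rabs (cos c) <= 1) by (apply Rabs_le, COS_bound).
  assert (0 <= Rabs (x - y)) by apply Rabs_pos. nra.
Qed.

Lemma ee_sub_int b k : ee (b - IZR k) = ee b.
Proof.
  unfold ee. destruct (Z_le_gt_dec 0 k) as [Hk|Hk].
  - replace k with (Z.of_nat (Z.to_nat k)) by lia. rewrite <- INR_IZR_INZ.
    set (n := Z.to_nat k).
    rewrite <- (cos_period (2 * PI * (b - INR n)) n), <- (sin_period (2 * PI * (b - INR n)) n).
    f_equal; f_equal; ring.
  - replace k with (- Z.of_nat (Z.to_nat (- k)))%Z by lia. rewrite opp_IZR, <- INR_IZR_INZ.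
    replace (2 * PI * (b - - INR (Z.to_nat (- k))))
      with (2 * PI * b + 2 * INR (Z.to_nat (- k)) * PI) by ring.
    rewrite cos_period, sin_period. reflexivity.
Qed.

Lemma dist_int_attained d : exists k : Z, Rabs (d - IZR k) <= dist_int d.
Proof.
  unfold dist_int. destruct (base_fp d) as [F1 F2].
  unfold frac_part, Rmin in *. destruct (Rle_dec _ _).
  - exists (Int_part d). rewrite Rabs_right; lra.
  - exists (Int_part d + 1)%Z. rewrite plus_IZR, Rabs_left1; lra.
Qed.

Lemma ee_sub_le a b : Cxmod (Cxsub (ee a) (ee b)) <= 4 * PI * dist_int (b - a).
Proof.
  destruct (dist_int_attained (b - a)) as [k Hk].
  rewrite <- (ee_sub_int b k).
  eapply Rle_trans; [apply Cmod_2Rmax|]. unfold ee; simpl.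
  assert (H1 := Rabs_cos_sub_le (2 * PI * a) (2 * PI * (b - IZR k))).
  assert (H2 := Rabs_sin_sub_le (2 * PI * a) (2 * PI * (b - IZR k))).
  replace (2 * PI * a - 2 * PI * (b - IZR k)) with ((2 * PI) * - (b - a - IZR k)) in H1, H2
    by ring.
  rewrite Rabs_mult, Rabs_Ropp, (Rabs_right (2 * PI)) in H1, H2
    by (apply Rle_ge; generalize PI_RGT_0; lra).
  assert (Hs : sqrt 2 <= 2).
  { assert (sqrt 4 = 2) by (replace 4 with (2 * 2) by ring; apply sqrt_square; lra).
    assert (sqrt 2 <= sqrt 4) by (apply sqrt_le_1_alt; lra). lra. }
  assert (HM : Rmax (Rabs (cos (2 * PI * a) - cos (2 * PI * (b - IZR k))))
                    (Rabs (sin (2 * PI * a) - sin (2 * PI * (b - IZR k))))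
               <= 2 * PI * dist_int (b - a)).
  { apply Rmax_lub; generalize PI_RGT_0; nra. }
  assert (0 <= Rmax (Rabs (cos (2 * PI * a) - cos (2 * PI * (b - IZR k))))
                    (Rabs (sin (2 * PI * a) - sin (2 * PI * (b - IZR k))))).
  { eapply Rle_trans; [apply Rabs_pos|apply Rmax_l]. }
  assert (0 <= sqrt 2) by apply sqrt_pos.
  nra.
Qed.

Lemma Rpower_pos b e : 0 < Rpower b e.
Proof. apply exp_pos. Qed.

Lemma le_sqrt_of_Rpower_le x e X : 1 <= x -> 2 <= e -> Rpower x e <= X -> x <= sqrt X.
Proof.
  intros Hx He HX. rewrite <- (sqrt_square x) by lra. apply sqrt_le_1_alt.
  replace (x * x) with (Rpower x (INR 2)) by (rewrite Rpower_pow by lra; simpl; ring).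
  apply Rle_trans with (Rpower x e); [apply Rle_Rpower; simpl; lra|exact HX].
Qed.

Lemma one_le_of_le_sqrt x X : 1 <= x -> x <= sqrt X -> 1 <= X.
Proof.
  intros Hx HX. assert (0 < X) by (apply sqrt_lt_0_alt; rewrite sqrt_0; lra).
  rewrite <- (sqrt_sqrt X) by lra. nra.
Qed.

Lemma ratio_le_of_sqrt eps delta X P :
  0 < eps -> 0 < delta -> 2 / (eps * delta) <= sqrt X -> 0 <= P <= 2 * sqrt X ->
  P / (delta * X) <= eps.
Proof.
  intros He Hd Hx HP.
  assert (Hs : 0 < sqrt X) by (eapply Rlt_le_trans; [|exact Hx]; apply Rdiv_lt_0_compat; nra).
  assert (HX0 : 0 < X) by (apply sqrt_lt_0_alt; rewrite sqrt_0; exact Hs).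
  assert (HX : X = sqrt X * sqrt X) by (rewrite sqrt_sqrt; lra).
  assert (H2 : 2 <= eps * delta * sqrt X).
  { apply Rmult_le_compat_l with (r := eps * delta) in Hx; [|nra].
    replace (eps * delta * (2 / (eps * delta))) with 2 in Hx by (field; lra). lra. }
  apply Rmult_le_reg_r with (delta * X); [nra|].
  unfold Rdiv. rewrite Rmult_assoc, Rinv_l, Rmult_1_r by nra.
  rewrite HX. nra.
Qed.

Lemma mul_Rpower_le_sqrt (X a P Q : R) :
  1 <= X -> 0 <= a <= 1/8 -> 0 <= P <= 2 * Rpower X a -> 0 <= Q <= Rpower X (1/4) ->
  P * Q <= 2 * sqrt X.
Proof.
  intros HX Ha HP HQ.
  assert (H1 : Rpower X a <= Rpower X (1/8)) by (apply Rle_Rpower; lra).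
  assert (H2 : Rpower X (1/8) * Rpower X (1/4) <= sqrt X).
  { rewrite <- Rpower_plus, <- Rpower_sqrt by lra. apply Rle_Rpower; lra. }
  assert (0 < Rpower X a) by apply Rpower_pos.
  assert (0 < Rpower X (1/4)) by apply Rpower_pos.
  apply Rle_trans with (2 * Rpower X (1/8) * Rpower X (1/4)); [apply Rmult_le_compat|]; lra.
Qed.

Lemma linearization_ratios_le (cstar eps delta Rr Nr Ur Vr qr : R) :
  0 < cstar <= 1/8 -> 0 < eps <= 1 -> 0 < delta <= 1 -> 1 <= Rr ->
  Rpower (2 / (eps * delta)) (2 / cstar * Rr ^ 3) <= Nr ->
  Rpower Nr (cstar / Rr ^ 2) <= Ur <= 2 * Rpower Nr (cstar / Rr ^ 2) ->
  Rpower Ur (cstar / Rr) <= Vr <= 2 * Rpower Ur (cstar / Rr) ->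
  0 <= qr <= Rpower Nr (1/4) ->
  Ur * qr / (delta * Nr) <= eps /\ Vr * Rpower Ur (1/4) / (delta * Ur) <= eps.
Proof.
  intros Hc He Hd HR HN HU HV Hq.
  set (x := 2 / (eps * delta)) in *.
  assert (Hx : 2 <= x).
  { unfold x. apply Rmult_le_reg_l with (eps * delta); [nra|].
    replace (eps * delta * (2 / (eps * delta))) with 2 by (field; lra). nra. }
  assert (Hc16 : 16 <= 2 / cstar).
  { apply Rmult_le_reg_l with cstar; [lra|].
    replace (cstar * (2 / cstar)) with 2 by (field; lra). lra. }
  assert (HR2 : 1 <= Rr ^ 2) by nra.
  assert (HR3 : 1 <= Rr ^ 3) by (simpl; nra).
  assert (HxN : x <= sqrt Nr) by (apply (le_sqrt_of_Rpower_le x (2 / cstar * Rr ^ 3)); nra).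
  (* U >= N^(cstar/R^2) >= x^(2R) *)
  assert (HxU : x <= sqrt Ur).
  { apply (le_sqrt_of_Rpower_le x (2 * Rr)); [lra|lra|].
    eapply Rle_trans; [|apply HU].
    replace (2 * Rr) with (2 / cstar * Rr ^ 3 * (cstar / Rr ^ 2)) by (field; split; lra).
    rewrite <- Rpower_mult. apply Rle_Rpower_l; [|split; [apply Rpower_pos|exact HN]].
    apply Rmult_le_pos; [lra|left; apply Rinv_0_lt_compat; lra]. }
  assert (HN1 : 1 <= Nr) by (apply (one_le_of_le_sqrt x); lra).
  assert (HU1 : 1 <= Ur) by (apply (one_le_of_le_sqrt x); lra).
  assert (Hexp : forall k, 1 <= k -> 0 <= cstar / k <= 1/8).
  { intros k Hk. split; [apply Rmult_le_pos; [lra|left; apply Rinv_0_lt_compat; lra]|].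
    apply Rle_trans with cstar; [|lra]. unfold Rdiv.
    rewrite <- (Rmult_1_r cstar) at 2. apply Rmult_le_compat_l; [lra|].
    rewrite <- Rinv_1. apply Rinv_le_contravar; lra. }
  assert (0 < Rpower Nr (cstar / Rr ^ 2)) by apply Rpower_pos.
  assert (0 < Rpower Ur (cstar / Rr)) by apply Rpower_pos.
  assert (0 < Rpower Ur (1/4)) by apply Rpower_pos.
  split; apply ratio_le_of_sqrt; try lra; try exact HxN; try exact HxU; split; try nra.
  - apply (mul_Rpower_le_sqrt Nr (cstar / Rr ^ 2)); try apply Hexp; lra.
  - apply (mul_Rpower_le_sqrt Ur (cstar / Rr)); try apply Hexp; lra.
Qed.

Theorem proposition9p4 :
  forall (lam : list Z), Forall (fun l => l <> 0%Z) lam ->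
  forall cstar : R, 0 < cstar <= 1/8 ->
  exists C C' : R, 0 < C /\ 0 < C' /\
  forall (eps delta : R) (R_ N : nat) (M : Z) (x y : nat -> Z)
         (q U V : nat) (r : Z -> nat) (h : Z -> Cx),
    0 < eps <= 1 -> 0 < delta <= 1 -> (1 <= R_)%nat ->
    (* M prime with Y <= M <= 2Y, Y = 2 (|lam_1| + ... + |lam_s|) N *)
    prime M ->
    let Y := (2 * fold_right Z.add 0 (map Z.abs lam) * Z.of_nat N)%Z in
    (Y <= M <= 2 * Y)%Z ->
    (* frequencies z_i = (x_i, y_i) in Z_M x Z_{M^2} *)
    (forall i, (1 <= i <= R_)%nat ->
       (0 <= x i < M)%Z /\ (0 <= y i < M ^ 2)%Z) ->
    Rpower (2 / (eps * delta)) (C * INR R_ ^ 3) <= INR N ->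
    linearization_system cstar eps delta R_ N
      (fun i => phase M (x i) (y i)) q U V r ->
    (* h supported in [N], with sup-norm at most 1/delta *)
    (forall n : Z, h n <> Cx0 -> (1 <= n <= Z.of_nat N)%Z) ->
    (forall n : Z, Cxmod (h n) <= / delta) ->
    (forall i, (1 <= i <= R_)%nat ->
      Cxmod (Cxsub (avgN N (fun n => Cxmul (h n) (ee (phase M (x i) (y i) n))))
                   (avgN N (fun n => Cxmul (htilde q U V r h n)
                                           (ee (phase M (x i) (y i) n)))))
        <= C' * eps) /\
    Cxmod (Cxsub (avgN N h) (avgN N (htilde q U V r h))) <= C' * eps.
Proof.
  intros lam _ cstar Hc. exists (2 / cstar), 25.
  split; [apply Rdiv_lt_0_compat; lra|]. split; [lra|].
  intros eps delta R_ N M x y q U V r h He Hd HR _ Y _ _ HN Hsys _ Hh.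
  destruct Hsys as (_ & HU1 & HV1 & _ & HU & HV & Hq & Hr & Hlin).
  assert (HN1 : (1 <= N)%nat).
  { apply INR_lt. eapply Rlt_le_trans; [apply Rpower_pos|exact HN]. }
  destruct (linearization_ratios_le cstar eps delta (INR R_) (INR N) (INR U) (INR V) (INR q))
    as [HUq HVU]; auto; try (split; [apply pos_INR|lra]).
  { apply (le_INR 1); lia. }
  split.
  - intros i Hi.
    eapply Rle_trans; [apply (avg_htilde_mul_le N U V q r h _ eps delta (4 * PI * (eps * delta)));
      auto; try lra|].
    + intros; apply ee_mod_le.
    + intros n j l Hn Hj Hl. eapply Rle_trans; [apply ee_sub_le|].
      apply Rmult_le_compat_l; [generalize PI_RGT_0; lra|]. exact (Hlin n j l i Hn Hj Hl Hi).
    + replace (4 * PI * (eps * delta) / delta) with (4 * PI * eps) by (field; lra).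
      generalize PI_4. nra.
  - rewrite <- (avgN_mul_1 N h), <- (avgN_mul_1 N (htilde q U V r h)).
    eapply Rle_trans; [apply (avg_htilde_mul_le N U V q r h _ eps delta 0); auto; try lra|].
    + intros. change (Cmod 1 <= 1). rewrite Cmod_1. lra.
    + intros. replace (Cxsub (1, 0) (1, 0)) with Cx0 by cxring.
      change (Cmod 0 <= 0). rewrite Cmod_0. lra.
    + unfold Rdiv. rewrite Rmult_0_l. lra.
Qed.
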